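(* Let $(\mathscr{D},b)$ be a finite bilinear form with $(\mathscr{D},b)\cong(\mathscr{D},-b)$, and let $\sigma\in\{0,4\}$. Then there exists exactly one equivalence class $\{\hat q\}$ of quadratic $\mathsf{T}$-refinements of $b$ such that $\tau_1(\hat q)/|\tau_1(\hat q)|=e^{2\pi i\sigma/8}$, where $\tau_1(\hat q)=\sum_{x\in\mathscr{D}}e^{2\pi i\hat q(x)}$.
   Context: A finite bilinear form $(\mathscr{D},b)$ is a finite abelian group $\mathscr{D}$ with a symmetric, bilinear, non-degenerate map $b:\mathscr{D}\times\mathscr{D}\to\mathbb{Q}/\mathbb{Z}$; $(\mathscr{D},b)\cong(\mathscr{D},-b)$ means there is a group automorphism $f$ of $\mathscr{D}$ with $b(f(x),f(y))=-b(x,y)$. A quadratic refinement of $b$ is a function $\hat q:\mathscr{D}\to\mathbb{Q}/\mathbb{Z}$ with $\hat q(x+y)-\hat q(x)-\hat q(y)+\hat q(0)=b(x,y)$ for all $x,y\in\mathscr{D}$. Two quadratic refinements $\hat q,\hat q'$ on $\mathscr{D}$ are equivalent if there is $\delta\in\mathscr{D}$ with $\hat q(x)=\hat q'(x+\delta)$ for all $x$; the equivalence class is denoted $\{\hat q\}$ (the Gauss sum $\tau_1$ depends only on the class). A quadratic refinement $\hat q$ is a $\mathsf{T}$-refinement if there is a group automorphism $\gamma$ of $\mathscr{D}$ with $\{\hat q\circ\gamma\}=\{-\hat q\}$. *)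

From mathcomp Require Import all_boot all_algebra.
From mathcomp Require Import complex.
From mathcomp Require Import reals trigo.

Set Implicit Arguments.
Unset Strict Implicit.
Unset Printing Implicit Defensive.

Import GRing.Theory Num.Theory.
Local Open Scope ring_scope.

(* Q/Z is represented by rationals taken modulo the integers:            *)
Definition eqQZ (a b : rat) : Prop := (a - b) \is a Num.int.

Section FiniteBilinearForms.
Variable D : finZmodType.

Definition group_aut (f : D -> D) : Prop :=
  bijective f /\ (forall x y, f (x + y) = f x + f y).

Definition finite_bilinear_form (b : D -> D -> rat) : Prop :=
  [/\ (forall x y, eqQZ (b x y) (b y x)),
      (forall x y z, eqQZ (b (x + y) z) (b x z + b y z)),
      (forall x y z, eqQZ (b x (y + z)) (b x y + b x z)) &
      (forall x, (forall y, eqQZ (b x y) 0) -> x = 0)].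

Definition iso_to_neg (b : D -> D -> rat) : Prop :=
  exists f : D -> D, group_aut f /\ forall x y, eqQZ (b (f x) (f y)) (- b x y).

Definition quad_refinement (b : D -> D -> rat) (q : D -> rat) : Prop :=
  forall x y, eqQZ (q (x + y) - q x - q y + q 0) (b x y).

Definition qr_equiv (q q' : D -> rat) : Prop :=
  exists delta : D, forall x, eqQZ (q x) (q' (x + delta)).

Definition T_refinement (b : D -> D -> rat) (q : D -> rat) : Prop :=
  quad_refinement b q /\
  exists gamma : D -> D, group_aut gamma /\
    qr_equiv (fun x => q (gamma x)) (fun x => - q x).

Definition e2pi (R : realType) (r : rat) : R[i] :=
  ((cos (2 * pi * ratr r)) +i* (sin (2 * pi * ratr r)))%C.

Definition tau1 (R : realType) (q : D -> rat) : R[i] :=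
  \sum_(x : D) e2pi R (q x).

End FiniteBilinearForms.

(* Two quadratic refinements of b differ by a Q/Z-valued character, which
   non-degeneracy writes as b(-, a); so any two refinements satisfy
   q'(x) = q(x + a) + c.  The Gauss sum obeys tau(q) tau(-q) = |D|, hence never
   vanishes, and such a shift multiplies it by e^{2 pi i c}: the phase of tau(q)
   determines the class of q.  Refinements exist, by extending one from a
   subgroup H to H + <g>.  If f is an isometry (D, b) -> (D, -b), then -q o f is a refinement,
   so -q o f ~ q + c and q + c/2 is a T-refinement.  For a T-refinement,
   tau(q) = tau(q o gamma) = tau(-q) is real, so its phase is 1 or -1, and adding
   1/2 to q flips it. *)

From mathcomp Require Import all_boot all_order all_algebra all_fingroup.
From mathcomp Require Import complex.
From mathcomp Require Import reals trigo.
From mathcomp Require Import ring lra.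
Set Implicit Arguments.
Unset Strict Implicit.
Unset Printing Implicit Defensive.

Import Order.TTheory GRing.Theory Num.Theory FinRing.Theory.
Local Open Scope ring_scope.

Section QZ.
Implicit Types r s : rat.

Lemma eqQZ_eq r s : r = s -> eqQZ r s.
Proof. by move->; rewrite /eqQZ subrr. Qed.

Lemma eqQZ_sym r s : eqQZ r s -> eqQZ s r.
Proof. by rewrite /eqQZ -opprB rpredN. Qed.

End QZ.

Ltac int_comb :=
  repeat first [ assumption | exact: rpred_nat | rewrite rpredN
               | apply: rpredB | apply: rpredD | apply: rpredM; first exact: rpred_nat ].

Section E2pi.
Variable R : realType.
Local Notation e := (e2pi R).

Lemma e2piD r s : e (r + s) = e r * e s.
Proof.
rewrite /e2pi rmorphD mulrDr cosD sinD.
by apply/eqP; rewrite eq_complex /= eqxx /=; apply/eqP; ring.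
Qed.

Lemma e2piN r : e (- r) = (e r)^*%C.
Proof. by rewrite /e2pi rmorphN mulrN cosN sinN. Qed.

Lemma e2pi_nat n : e n%:R = 1.
Proof.
elim: n => [|n IH]; first by rewrite /e2pi rmorph0 mulr0 cos0 sin0.
by rewrite -addn1 natrD e2piD IH /e2pi rmorph1 mulr1 mulr_natl cos2pi sin2pi mul1r.
Qed.

Lemma e2pi_int r : r \is a Num.int -> e r = 1.
Proof.
rewrite intrE => /orP[/natrP[n ->]|/natrP[n /(canRL opprK) ->]].
  exact: e2pi_nat.
by rewrite e2piN e2pi_nat conjc1.
Qed.

Lemma e2pi_eqQZ r s : eqQZ r s -> e r = e s.
Proof. by move=> hrs; rewrite -(subrK s r) e2piD (e2pi_int hrs) mul1r. Qed.

Lemma e2pi_half : e 2^-1 = -1.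
Proof.
rewrite /e2pi fmorphV rmorph_nat mulrAC divff ?pnatr_eq0 // mul1r cospi sinpi.
by apply/eqP; rewrite eq_complex /= oppr0 !eqxx.
Qed.

Lemma norm_e2pi r : `|e r| = 1.
Proof. by rewrite normc_def /= cos2Dsin2 sqrtr1. Qed.

Lemma cos2pi_eq1_frac (t : R) : 0 <= t < 1 -> cos (2 * pi * t) = 1 -> t = 0.
Proof.
move=> /andP[t0 t1] hc.
have sin0 : sin (pi * t) = 0.
  have : sin (pi * t) ^+ 2 = 0.
    by rewrite sin2cos2; move: hc; rewrite -mulrA mulr_natl cos_mulr2n; lra.
  by move/eqP; rewrite sqrf_eq0 => /eqP.
apply/eqP; rewrite eq_le t0 andbT leNgt; apply/negP => tpos.
have pi0 := @pi_gt0 R.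
have : 0 < pi * t < pi by apply/andP; split; nra.
by move/sin_gt0_pi; rewrite sin0 ltxx.
Qed.

Lemma e2pi_eq1 r : e r = 1 -> r \is a Num.int.
Proof.
move=> er; have /andP[fl_le lt_fl] := floor_itv r.
set s := r - (Num.floor r)%:~R.
have es : e s = 1 by rewrite e2piD er mul1r e2pi_int // rpredN intr_int.
have : ratr s = 0 :> R.
  apply: cos2pi_eq1_frac.
    rewrite ler0q -(rmorph1 (@ratr R)) ltr_rat subr_ge0 fl_le /=.
    by move: lt_fl; rewrite intrD /s; lra.
  by move/eqP: es; rewrite eq_complex /= => /andP[/eqP].
by move/eqP; rewrite fmorph_eq0 subr_eq0 => /eqP ->; exact: intr_int.
Qed.

End E2pi.

Lemma real_phase (R : realType) (z : R[i]) :
  z^*%C = z -> z != 0 -> z / `|z| = 1 \/ z / `|z| = -1.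
Proof.
move=> zr z0; have : z \is Num.real by rewrite CrealE; apply/eqP.
move/realEsign=> zE.
have -> : z / `|z| = (-1) ^+ (z < 0)%R by rewrite {1}zE -mulrA divff ?normr_eq0 ?mulr1.
by case: (z < 0)%R; [right | left].
Qed.

Section FinZmod.
Variable D : finZmodType.
Implicit Types x y g : D.

Lemma groupD (H : {group D}) x y : x \in H -> y \in H -> x + y \in H.
Proof. exact: groupM. Qed.

Lemma groupN (H : {group D}) x : x \in H -> - x \in H.
Proof. by rewrite -zmodVgE groupV. Qed.

Lemma groupMn (H : {group D}) x k : x \in H -> x *+ k \in H.
Proof. by move=> xH; rewrite -zmodXgE groupX. Qed.

Lemma mem_join_cycle (H : {group D}) g x : x \in (H <*> <[g]>)%g -> exists h k, h \in H /\ x = h + g *+ k.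
Proof.
have cHg : commute H <[g]>%g by apply: centC; apply/centsP => y _ z _; apply: zmod_mulgC.
rewrite (comm_joingE cHg) => /mulsgP[h _ hH /cycleP[k ->] ->].
by exists h, k; rewrite zmodMgE zmodXgE.
Qed.

Lemma cardD_neq0 (R : realType) : (#|D|%:R : R[i]) != 0.
Proof. by rewrite pnatr_eq0 -lt0n; apply/card_gt0P; exists 0. Qed.

End FinZmod.

Section Forms.
Variables (R : realType) (D : finZmodType) (b : D -> D -> rat).
Hypothesis hb : finite_bilinear_form b.
Local Notation e := (e2pi R).
Local Notation tau := (@tau1 D R).
Implicit Types (q l : D -> rat) (x y z : D).

Lemma bsym x y : eqQZ (b x y) (b y x). Proof. by case: hb. Qed.
Lemma bDl x y z : eqQZ (b (x + y) z) (b x z + b y z). Proof. by case: hb. Qed.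
Lemma bDr x y z : eqQZ (b x (y + z)) (b x y + b x z). Proof. by case: hb. Qed.
Lemma b_nondeg x : (forall y, eqQZ (b x y) 0) -> x = 0.
Proof. by case: hb => _ _ _; apply. Qed.

Lemma b0l x : eqQZ (b 0 x) 0.
Proof.
have := bDl 0 0 x; rewrite addr0 /eqQZ => h.
have -> : b 0 x - 0 = - (b 0 x - (b 0 x + b 0 x)) by ring.
by int_comb.
Qed.

Lemma bMnl x y k : eqQZ (b (x *+ k) y) (k%:R * b x y).
Proof.
elim: k => [|k IH]; first by rewrite mulr0n mul0r; apply: b0l.
have := bDl x (x *+ k) y; move: IH; rewrite /eqQZ mulrS => IH h.
have -> : b (x + x *+ k) y - k.+1%:R * b x y =
   (b (x + x *+ k) y - (b x y + b (x *+ k) y)) + (b (x *+ k) y - k%:R * b x y).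
  by rewrite -addn1 natrD; ring.
by int_comb.
Qed.

Lemma bMnr x y k : eqQZ (b x (y *+ k)) (k%:R * b x y).
Proof.
have := bMnl y x k; have := bsym x (y *+ k); have := bsym y x; rewrite /eqQZ => h1 h2 h3.
have -> : b x (y *+ k) - k%:R * b x y =
  (b x (y *+ k) - b (y *+ k) x) + (b (y *+ k) x - k%:R * b y x) + k%:R * (b y x - b x y).
  by ring.
by int_comb.
Qed.

Lemma bMn x y k1 k2 : eqQZ (b (x *+ k1) (y *+ k2)) ((k1 * k2)%:R * b x y).
Proof.
have := bMnl x (y *+ k2) k1; have := bMnr x y k2; rewrite /eqQZ => h1 h2.
have -> : b (x *+ k1) (y *+ k2) - (k1 * k2)%:R * b x y =
  (b (x *+ k1) (y *+ k2) - k1%:R * b x (y *+ k2)) + k1%:R * (b x (y *+ k2) - k2%:R * b x y).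
  by rewrite natrM; ring.
by int_comb.
Qed.

Lemma b_expand x1 x2 y k1 k2 :
  eqQZ (b (x1 + y *+ k1) (x2 + y *+ k2))
       (b x1 x2 + k2%:R * b x1 y + k1%:R * b x2 y + (k1 * k2)%:R * b y y).
Proof.
have := bDl x1 (y *+ k1) (x2 + y *+ k2); have := bDr x1 x2 (y *+ k2).
have := bDr (y *+ k1) x2 (y *+ k2); have := bMnr x1 y k2; have := bMnl y x2 k1.
have := bsym y x2; have := bMn y y k1 k2; rewrite /eqQZ => h1 h2 h3 h4 h5 h6 h7.
have -> : b (x1 + y *+ k1) (x2 + y *+ k2) -
    (b x1 x2 + k2%:R * b x1 y + k1%:R * b x2 y + (k1 * k2)%:R * b y y) =
  (b (x1 + y *+ k1) (x2 + y *+ k2) - (b x1 (x2 + y *+ k2) + b (y *+ k1) (x2 + y *+ k2)))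
  + (b x1 (x2 + y *+ k2) - (b x1 x2 + b x1 (y *+ k2)))
  + (b (y *+ k1) (x2 + y *+ k2) - (b (y *+ k1) x2 + b (y *+ k1) (y *+ k2)))
  + (b x1 (y *+ k2) - k2%:R * b x1 y) + (b (y *+ k1) x2 - k1%:R * b y x2)
  + k1%:R * (b y x2 - b x2 y) + (b (y *+ k1) (y *+ k2) - (k1 * k2)%:R * b y y).
  by ring.
by int_comb.
Qed.

Definition qz_character l := forall x y, eqQZ (l (x + y)) (l x + l y).

Lemma sum_e2pi_character l : qz_character l ->
  \sum_x e (l x) = if [forall x, l x \is a Num.int] then #|D|%:R else 0.
Proof.
move=> hl; case: ifP => [/forallP lZ | /negbT/forallPn[x0 lx0]].
  by under eq_bigr => x _ do rewrite (e2pi_int _ (lZ x)); rewrite sumr_const.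
set S := \sum_x e (l x).
have SE : S = e (l x0) * S.
  rewrite {1}/S (reindex_inj (addIr x0)) /= mulr_sumr; apply: eq_bigr => x _.
  by rewrite -e2piD [l x0 + _]addrC; apply/e2pi_eqQZ/hl.
have /eqP : (1 - e (l x0)) * S = 0 by rewrite mulrBl mul1r -SE subrr.
rewrite mulf_eq0 subr_eq0 => /orP[/eqP/esym/e2pi_eq1 lx0Z | /eqP //].
by rewrite lx0Z in lx0.
Qed.

Lemma sum_e2pi_b z : \sum_y e (b z y) = if z == 0 then #|D|%:R else 0.
Proof.
rewrite sum_e2pi_character; last by move=> x y; apply: bDr.
case: eqP => [-> | nz0].
  by case: forallP => // -[] y; have := b0l y; rewrite /eqQZ subr0.
by case: forallP => // bZ; case: nz0; apply: b_nondeg => y; rewrite /eqQZ subr0.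
Qed.

Lemma sum_e2pi_bN z : \sum_y e (- b z y) = if z == 0 then #|D|%:R else 0.
Proof.
under eq_bigr => y _ do rewrite e2piN.
by rewrite -rmorph_sum sum_e2pi_b; case: eqP => _; [exact: conjc_nat | exact: rmorph0].
Qed.

(* If no l - b(-, a) were integral, every inner sum below would vanish, while
   exchanging the sums leaves only the term x = 0, equal to |D|. *)
Lemma qz_character_pairing l : qz_character l -> exists a, forall x, eqQZ (l x) (b x a).
Proof.
move=> hl; have [/existsP[a /forallP la] | /existsPn nla] :=
  boolP [exists a, [forall x, (l x - b x a) \is a Num.int]].
  by exists a.
have l0 : l 0 \is a Num.int.
  have := hl 0 0; rewrite addr0 /eqQZ => h.
  have -> : l 0 = - (l 0 - (l 0 + l 0)) by ring.
  by rewrite rpredN.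
have : \sum_a \sum_x e (l x - b x a) = 0.
  apply: big1 => a _; rewrite sum_e2pi_character ?(negbTE (nla a)) // => x y.
  have := hl x y; have := bDl x y a; rewrite /eqQZ => h1 h2.
  have -> : l (x + y) - b (x + y) a - (l x - b x a + (l y - b y a)) =
    (l (x + y) - (l x + l y)) - (b (x + y) a - (b x a + b y a)) by ring.
  by int_comb.
rewrite exchange_big /=.
under eq_bigr => x _ do under eq_bigr => a _ do rewrite e2piD.
under eq_bigr => x _ do rewrite -mulr_sumr sum_e2pi_bN.
rewrite (bigD1 0) //= eqxx big1 => [|x /negbTE->]; last by rewrite mulr0.
by rewrite addr0 e2pi_int // mul1r => /eqP; rewrite (negbTE (cardD_neq0 D R)).
Qed.

Lemma quad_refinement_shift q1 q2 : quad_refinement b q1 -> quad_refinement b q2 ->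
  exists a c, forall x, eqQZ (q1 x) (q2 (x + a) + c).
Proof.
move=> h1 h2; pose l x := q1 x - q1 0 - (q2 x - q2 0).
have [a la] : exists a, forall x, eqQZ (l x) (b x a).
  apply: qz_character_pairing => x y.
  have := h1 x y; have := h2 x y; rewrite /eqQZ /l => g2 g1.
  have -> : q1 (x + y) - q1 0 - (q2 (x + y) - q2 0) -
     (q1 x - q1 0 - (q2 x - q2 0) + (q1 y - q1 0 - (q2 y - q2 0))) =
     (q1 (x + y) - q1 x - q1 y + q1 0 - b x y) -
     (q2 (x + y) - q2 x - q2 y + q2 0 - b x y) by ring.
  by int_comb.
exists a, (q1 0 - q2 a) => x.
have := la x; have := h2 x a; rewrite /eqQZ /l => g2 g1.
have -> : q1 x - (q2 (x + a) + (q1 0 - q2 a)) =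
  (q1 x - q1 0 - (q2 x - q2 0) - b x a) -
  (q2 (x + a) - q2 x - q2 a + q2 0 - b x a) by ring.
by int_comb.
Qed.

Lemma tau_eqQZ q q' : (forall x, eqQZ (q x) (q' x)) -> tau q = tau q'.
Proof. by move=> qq'; apply: eq_bigr => x _; apply: e2pi_eqQZ. Qed.

Lemma tau_addr q c : tau (fun x => q x + c) = e c * tau q.
Proof. by rewrite /tau1 mulr_sumr; apply: eq_bigr => x _; rewrite e2piD mulrC. Qed.

Lemma tau_translate q a : tau (fun x => q (x + a)) = tau q.
Proof. by rewrite /tau1 [in RHS](reindex_inj (addIr a)). Qed.

Lemma tau_shift q a c : tau (fun x => q (x + a) + c) = e c * tau q.
Proof. by rewrite (tau_addr (fun x => q (x + a))) tau_translate. Qed.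

Lemma tau_comp q f : bijective f -> tau (fun x => q (f x)) = tau q.
Proof. by move=> /bij_inj fI; rewrite /tau1 [in RHS](reindex_inj fI). Qed.

Lemma tau_opp q : tau (fun x => - q x) = (tau q)^*%C.
Proof. by rewrite /tau1 rmorph_sum; apply: eq_bigr => x _; apply: e2piN. Qed.

Lemma tau_mul_opp q : quad_refinement b q -> tau q * tau (fun x => - q x) = #|D|%:R.
Proof.
move=> hq; rewrite /tau1 mulr_sumr.
under eq_bigr => y _ do rewrite mulr_suml (reindex_inj (addIr y)) /=.
have qE y z : e (q (z + y)) * e (- q y) = e (q z - q 0) * e (b z y).
  rewrite -!e2piD; apply: e2pi_eqQZ.
  have := hq z y; rewrite /eqQZ => h.
  have -> : q (z + y) + - q y - (q z - q 0 + b z y) =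
     q (z + y) - q z - q y + q 0 - b z y by ring.
  exact: h.
under eq_bigr => y _ do under eq_bigr => z _ do rewrite qE.
rewrite exchange_big /=.
under eq_bigr => z _ do rewrite -mulr_sumr sum_e2pi_b.
rewrite (bigD1 0) //= eqxx big1 => [|z /negbTE->]; last by rewrite mulr0.
by rewrite addr0 subrr e2pi_int // mul1r.
Qed.

Lemma tau_neq0 q : quad_refinement b q -> tau q != 0.
Proof.
move=> /tau_mul_opp; apply: contra_eqN => /eqP->.
by rewrite mul0r eq_sym (cardD_neq0 D R).
Qed.

Definition refines_on (H : {set D}) q :=
  forall x y, x \in H -> y \in H -> eqQZ (q (x + y) - q x - q y + q 0) (b x y).

Section CyclicExtension.
Variables (H : {group D}) (q : D -> rat) (g : D).
Hypothesis hq : refines_on H q.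

Lemma exists_multiple_in : exists d, (0 < d)%N && (g *+ d \in H).
Proof. by exists #[g]%g; rewrite order_gt0 -zmodXgE expg_order group1. Qed.

Definition rel_order := ex_minn exists_multiple_in.
Local Notation m := rel_order.

Lemma rel_order_gt0 : (0 < m)%N.
Proof. by rewrite /rel_order; case: ex_minnP => d /andP[]. Qed.

Lemma rel_order_mem : g *+ m \in H.
Proof. by rewrite /rel_order; case: ex_minnP => d /andP[]. Qed.

Lemma rel_order_min d : (0 < d)%N -> g *+ d \in H -> (m <= d)%N.
Proof. by move=> d0 dH; rewrite /rel_order; case: ex_minnP => n _; apply; rewrite d0. Qed.

Lemma rel_order_dvd d : g *+ d \in H -> (m %| d)%N.
Proof.
move=> dH; have modH : g *+ (d %% m) \in H.
  have -> : g *+ (d %% m) = g *+ d - g *+ (d %/ m * m).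
    by rewrite {2}(divn_eq d m) mulrnDr addrC addKr.
  by rewrite groupD // groupN // mulnC mulrnA groupMn // rel_order_mem.
rewrite /dvdn; apply/negPn/negP; rewrite -lt0n => mod_gt0.
by have := rel_order_min mod_gt0 modH; rewrite leqNgt ltn_pmod // rel_order_gt0.
Qed.

(* On H + <g> the refinement identity forces the value at h + g *+ k from q h,
   b h g and the prescribed value q 0 + ext_phi k at g *+ k; the slope is chosen
   so that this prescription agrees with q at k = rel_order, hence at every
   multiple of g lying in H. *)
Definition ext_slope : rat :=
  (q (g *+ m) - q 0 - b g g * (m%:R * (m%:R - 1) / 2)) / m%:R.

Definition ext_phi (k : nat) : rat :=
  ext_slope * k%:R + b g g * (k%:R * (k%:R - 1) / 2).

Definition ext_value (h : D) (k : nat) : rat := q h + k%:R * b h g + ext_phi k.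

Lemma ext_phiD k1 k2 : ext_phi (k1 + k2) = ext_phi k1 + ext_phi k2 + (k1 * k2)%:R * b g g.
Proof. by rewrite /ext_phi natrD natrM; field. Qed.

Lemma q_rel_order : q (g *+ m) = q 0 + ext_phi m.
Proof.
have m0 : m%:R != 0 :> rat by rewrite pnatr_eq0 -lt0n rel_order_gt0.
by rewrite /ext_phi /ext_slope; field.
Qed.

Lemma q_multipleD k1 k2 : g *+ k1 \in H -> g *+ k2 \in H ->
  eqQZ (q (g *+ k1)) (q 0 + ext_phi k1) -> eqQZ (q (g *+ k2)) (q 0 + ext_phi k2) ->
  eqQZ (q (g *+ (k1 + k2))) (q 0 + ext_phi (k1 + k2)).
Proof.
move=> k1H k2H; have := hq k1H k2H; have := bMn g g k1 k2.
rewrite -mulrnDr ext_phiD /eqQZ => f1 f2 f3 f4.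
have -> : q (g *+ (k1 + k2)) - (q 0 + (ext_phi k1 + ext_phi k2 + (k1 * k2)%:R * b g g)) =
  (q (g *+ (k1 + k2)) - q (g *+ k1) - q (g *+ k2) + q 0 - b (g *+ k1) (g *+ k2))
  + (q (g *+ k1) - (q 0 + ext_phi k1)) + (q (g *+ k2) - (q 0 + ext_phi k2))
  + (b (g *+ k1) (g *+ k2) - (k1 * k2)%:R * b g g) by ring.
by int_comb.
Qed.

Lemma q_multiple d : g *+ d \in H -> eqQZ (q (g *+ d)) (q 0 + ext_phi d).
Proof.
move=> /rel_order_dvd/dvdnP[j ->]; elim: j => [|j IH].
  by apply: eqQZ_eq; rewrite mul0n mulr0n /ext_phi; ring.
rewrite mulSn; apply: q_multipleD => //.
- exact: rel_order_mem.
- by rewrite mulnC mulrnA groupMn // rel_order_mem.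
- exact/eqQZ_eq/q_rel_order.
Qed.

Lemma ext_value_shift h d k : h \in H -> g *+ d \in H ->
  eqQZ (ext_value h (k + d)) (ext_value (h + g *+ d) k).
Proof.
move=> hH dH; have := hq hH dH; have := q_multiple dH; have := bMnr h g d.
have := bDl h (g *+ d) g; have := bMnl g g d; rewrite /eqQZ => f1 f2 f3 f4 f5.
have -> : ext_value h (k + d) - ext_value (h + g *+ d) k =
    - (q (h + g *+ d) - q h - q (g *+ d) + q 0 - b h (g *+ d))
    - (q (g *+ d) - (q 0 + ext_phi d))
    - (b h (g *+ d) - d%:R * b h g)
    - k%:R * ((b (h + g *+ d) g - (b h g + b (g *+ d) g)) + (b (g *+ d) g - d%:R * b g g)).
  by rewrite /ext_value ext_phiD natrD natrM; ring.
by int_comb.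
Qed.

Lemma ext_value_wd h h' k k' : h \in H -> h' \in H -> h + g *+ k = h' + g *+ k' ->
  eqQZ (ext_value h k) (ext_value h' k').
Proof.
wlog le_k'k : h h' k k' / (k' <= k)%N => [W hH h'H E|].
  case: (leqP k' k) => [le | /ltnW le]; first exact: W.
  by apply/eqQZ_sym/W => //; rewrite E.
move=> hH h'H; rewrite -(subnKC le_k'k); set d := (k - k')%N => E.
have h'E : h' = h + g *+ d.
  by apply: (addIr (g *+ k')); rewrite -E mulrnDr [g *+ k' + _]addrC addrA.
have dH : g *+ d \in H by rewrite -(addKr h (g *+ d)) -h'E groupD // groupN.
by rewrite h'E; exact: ext_value_shift.
Qed.

Lemma ext_value_refines h1 h2 k1 k2 : h1 \in H -> h2 \in H ->
  eqQZ (ext_value (h1 + h2) (k1 + k2) - ext_value h1 k1 - ext_value h2 k2 + q 0)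
       (b (h1 + g *+ k1) (h2 + g *+ k2)).
Proof.
move=> h1H h2H; have := hq h1H h2H; have := bDl h1 h2 g; have := b_expand h1 h2 g k1 k2.
rewrite /eqQZ => f1 f2 f3.
have -> : ext_value (h1 + h2) (k1 + k2) - ext_value h1 k1 - ext_value h2 k2 + q 0
    - b (h1 + g *+ k1) (h2 + g *+ k2) =
  (q (h1 + h2) - q h1 - q h2 + q 0 - b h1 h2)
  + (k1 + k2)%:R * (b (h1 + h2) g - (b h1 g + b h2 g))
  - (b (h1 + g *+ k1) (h2 + g *+ k2)
     - (b h1 h2 + k2%:R * b h1 g + k1%:R * b h2 g + (k1 * k2)%:R * b g g)).
  by rewrite /ext_value ext_phiD natrD; ring.
by int_comb.
Qed.

Definition ext_refinement x : rat :=
  if [pick hk : D * 'I_#[g]%g | (hk.1 \in H) && (x == hk.1 + g *+ hk.2)] is Some hk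
  then ext_value hk.1 hk.2 else 0.

Lemma ext_refinementE h k : h \in H -> eqQZ (ext_refinement (h + g *+ k)) (ext_value h k).
Proof.
move=> hH; rewrite /ext_refinement; case: pickP => [[h' k'] /andP[/= h'H /eqP E] | none].
  exact: ext_value_wd (esym E).
have := none (h, Ordinal (ltn_pmod k (order_gt0 g))).
by rewrite /= hH /= -!zmodXgE expg_mod_order eqxx.
Qed.

Lemma refines_on_join : refines_on (H <*> <[g]>)%g ext_refinement.
Proof.
move=> x y /mem_join_cycle[h1 [k1 [h1H ->]]] /mem_join_cycle[h2 [k2 [h2H ->]]].
have -> : h1 + g *+ k1 + (h2 + g *+ k2) = (h1 + h2) + g *+ (k1 + k2).
  by rewrite mulrnDr addrACA.
have := ext_refinementE 0 (group1 H); rewrite mulr0n addr0.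
have -> : ext_value 0 0 = q 0 by rewrite /ext_value /ext_phi; ring.
have := ext_refinementE (k1 + k2) (groupD h1H h2H).
have := ext_refinementE k1 h1H; have := ext_refinementE k2 h2H.
have := ext_value_refines k1 k2 h1H h2H; rewrite /eqQZ => f f2 f1 f12 f0.
set r := ext_refinement.
have -> : r (h1 + h2 + g *+ (k1 + k2)) - r (h1 + g *+ k1) - r (h2 + g *+ k2) + r 0
    - b (h1 + g *+ k1) (h2 + g *+ k2) =
  (r (h1 + h2 + g *+ (k1 + k2)) - ext_value (h1 + h2) (k1 + k2))
  - (r (h1 + g *+ k1) - ext_value h1 k1) - (r (h2 + g *+ k2) - ext_value h2 k2)
  + (r 0 - q 0)
  + (ext_value (h1 + h2) (k1 + k2) - ext_value h1 k1 - ext_value h2 k2 + q 0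
     - b (h1 + g *+ k1) (h2 + g *+ k2)) by ring.
by int_comb.
Qed.

End CyclicExtension.

Lemma quad_refinement_exists : exists q, quad_refinement b q.
Proof.
suff grow n (H : {group D}) q : (#|D| - #|H| < n)%N -> refines_on H q ->
    exists q, quad_refinement b q.
  apply: (grow #|D|.+1 1%G (fun=> 0)); first by rewrite ltnS leq_subr.
  move=> x y /set1P-> /set1P->; change (eqQZ (0 - 0 - 0 + 0) (b 0 0)).
  by rewrite !subrr; apply/eqQZ_sym/b0l.
elim: n H q => // n IH H q Hn hq.
have [g gH | Hfull] := pickP [predC H]; last first.
  by exists q => x y; apply: hq; apply/negbFE; apply: Hfull.
have HK : (#|H| < #|(H <*> <[g]>)%G|)%N.
  apply: proper_card; rewrite properE joing_subl /=; apply/subsetPn; exists g => //.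
  exact: (subsetP (joing_subr _ _)) _ (cycle_id g).
have KD : (#|(H <*> <[g]>)%G| <= #|D|)%N := max_card _.
apply: (IH _ (ext_refinement H q g)); last exact: refines_on_join.
by rewrite -ltnS; apply: leq_trans Hn; rewrite ltnS ltn_sub2l // (leq_trans HK KD).
Qed.

Lemma quad_refinement_addr q c : quad_refinement b q -> quad_refinement b (fun x => q x + c).
Proof.
move=> hq x y; have := hq x y; rewrite /eqQZ => h.
have -> : q (x + y) + c - (q x + c) - (q y + c) + (q 0 + c) - b x y =
  q (x + y) - q x - q y + q 0 - b x y by ring.
exact: h.
Qed.

Lemma quad_refinement_anti_iso q f : group_aut f ->
    (forall x y, eqQZ (b (f x) (f y)) (- b x y)) ->
  quad_refinement b q -> quad_refinement b (fun x => - q (f x)).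
Proof.
case=> _ fD hf hq x y /=.
have f0 : f 0 = 0 by apply: (addrI (f 0)); rewrite -fD !addr0.
rewrite fD f0; have := hq (f x) (f y); have := hf x y; rewrite /eqQZ => h1 h2.
have -> : - q (f x + f y) - - q (f x) - - q (f y) + - q 0 - b x y =
  - (q (f x + f y) - q (f x) - q (f y) + q 0 - b (f x) (f y))
  - (b (f x) (f y) - - b x y) by ring.
by int_comb.
Qed.

Lemma T_refinement_exists : iso_to_neg b -> exists q, T_refinement b q.
Proof.
case=> f [faut hf]; have [q hq] := quad_refinement_exists.
have [a [c hac]] := quad_refinement_shift (quad_refinement_anti_iso faut hf hq) hq.
exists (fun x => q x + c / 2); split; first exact: quad_refinement_addr.
exists f; split=> //; exists a => x; have := hac x; rewrite /eqQZ => h.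
have -> : q (f x) + c / 2 - - (q (x + a) + c / 2) = - (- q (f x) - (q (x + a) + c)).
  by field.
by rewrite rpredN.
Qed.

Local Notation phase q := (tau q / `|tau q|).

Lemma tau_T_real q : T_refinement b q -> (tau q)^*%C = tau q.
Proof.
case=> _ [f [[fbij _] [d hd]]].
rewrite -tau_opp -(tau_comp q fbij) (tau_eqQZ hd).
by rewrite (tau_translate (fun x => - q x)).
Qed.

Lemma T_refinement_add_half q : T_refinement b q -> T_refinement b (fun x => q x + 2^-1).
Proof.
case=> hq [f [faut [d hd]]]; split; first exact: quad_refinement_addr.
exists f; split=> //; exists d => x; have := hd x; rewrite /eqQZ => h.
have -> : q (f x) + 2^-1 - - (q (x + d) + 2^-1) = (q (f x) - - q (x + d)) + 1 by field.
by rewrite rpredD.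
Qed.

Lemma phase_add_half q : phase (fun x => q x + 2^-1) = - phase q.
Proof. by rewrite tau_addr e2pi_half mulN1r normrN mulNr. Qed.

Lemma T_refinement_phase w : iso_to_neg b -> w = 1 \/ w = -1 ->
  exists q, T_refinement b q /\ phase q = w.
Proof.
move=> /T_refinement_exists[q Tq] w1; have Tq_half := T_refinement_add_half Tq.
have [] := real_phase (tau_T_real Tq) (tau_neq0 Tq.1) => phq; case: w1 => ->;
  by [exists q | exists (fun x => q x + 2^-1); rewrite phase_add_half phq ?opprK].
Qed.

Lemma quad_refinement_phase_eq q q' : quad_refinement b q -> quad_refinement b q' ->
  phase q' = phase q -> qr_equiv q' q.
Proof.
move=> hq hq'; have [a [c hac]] := quad_refinement_shift hq' hq.
have -> : tau q' = e c * tau q by rewrite -(tau_shift q a c); apply: tau_eqQZ.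
have ph0 : phase q != 0 by rewrite mulf_neq0 ?invr_eq0 ?normr_eq0 ?tau_neq0.
rewrite normrM norm_e2pi mul1r -mulrA -{2}[phase q]mul1r.
move=> /(mulIf ph0)/e2pi_eq1 cZ; exists a => x; have := hac x; rewrite /eqQZ => h.
have -> : q' x - q (x + a) = (q' x - (q (x + a) + c)) + c by ring.
by int_comb.
Qed.

End Forms.

Theorem proposition7 (R : realType) (D : finZmodType) (b : D -> D -> rat)
    (sigma : nat) :
  finite_bilinear_form b ->
  iso_to_neg b ->
  (sigma = 0%N \/ sigma = 4%N) ->
  exists q : D -> rat,
    [/\ T_refinement b q,
        tau1 R q / `|tau1 R q| = e2pi R (sigma%:R / 8%:R) &
        forall q' : D -> rat,
          T_refinement b q' ->
          tau1 R q' / `|tau1 R q'| = e2pi R (sigma%:R / 8%:R) ->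
          qr_equiv q' q].
Proof.
move=> hb hiso hsigma.
have w1 : e2pi R (sigma%:R / 8%:R) = 1 \/ e2pi R (sigma%:R / 8%:R) = -1.
  case: hsigma => ->; [left | right].
    by rewrite mulr0n mul0r; apply: e2pi_int; exact: rpred0.
  by rewrite (_ : 4%:R / 8%:R = 2^-1) ?e2pi_half //; field.
have [q [Tq phq]] := T_refinement_phase hb hiso w1.
exists q; split=> // q' Tq' phq'.
by apply: (quad_refinement_phase_eq (R := R) hb Tq.1 Tq'.1); rewrite phq phq'.
Qed.
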